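(* Let $0<q<1$, let $r\ge1$, $s\ge1$ be integers with $r-1\le s$, and $\alpha\in\mathbb{R}\setminus\mathbb{Z}_-$. Let $a_j>0$ real and $b_j\in\mathbb{C}$ ($j=1,\dots,r-1$), and $c_\ell>0$ real and $d_\ell\in\mathbb{C}$ ($\ell=1,\dots,s-1$), with $a_jn+\mathrm{Re}(b_j)\notin\mathbb{Z}_-$ and $c_\ell n+\mathrm{Re}(d_\ell)\notin\mathbb{Z}_-$ for all positive integers $n$ (when $r=1$ there are no $a_j,b_j$; when $s=1$ there are no $c_\ell,d_\ell$; empty products equal $1$). Put $A=\dfrac{\prod_{j=1}^{r-1}[a_j]_q}{\prod_{\ell=1}^{s-1}[c_\ell]_q}$ and $$\lambda_n=\frac{q^{n+\alpha}\prod_{\ell=1}^{s-1}[n]_{q^{c_\ell}}}{[n]_q\prod_{j=1}^{r-1}[n]_{q^{a_j}}}(q-1).$$ Then for every $z\in\mathbb{C}$, $$\lim_{n\to+\infty}{}_r\phi_s\!\left(\begin{array}{c}q^{-n},q^{a_1n+b_1},\dots,q^{a_{r-1}n+b_{r-1}}\\ q^{\alpha},q^{c_1n+d_1},\dots,q^{c_{s-1}n+d_{s-1}}\end{array};q,\lambda_n z\right)=\sum_{k=0}^{\infty}(-1)^{(1+r-s)k}q^{(2+s-r)\binom k2}A^k\frac{z^k q^{\alpha k}(1-q)^{(2+r-s)k}}{(q^{\alpha};q)_k(q;q)_k}.$$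
   Context: $\mathbb{Z}_-=\{0,-1,-2,\dots\}$. For $w\in\mathbb{C}$, $q^{w}:=e^{w\ln q}$. For $a\in\mathbb{C}$: $(a;q)_0=1$, $(a;q)_k=\prod_{j=0}^{k-1}(1-aq^{j})$, and $(a_1,\dots,a_r;q)_k=\prod_{i=1}^r(a_i;q)_k$. The $q$-number is $[z]_q=\dfrac{1-q^{z}}{1-q}$, and $[n]_{q^{a}}=\dfrac{1-q^{an}}{1-q^{a}}$. The basic hypergeometric series is $${}_r\phi_s\!\left(\begin{array}{c}a_1,\dots,a_r\\ b_1,\dots,b_s\end{array};q,z\right)=\sum_{k=0}^{\infty}\frac{(a_1,\dots,a_r;q)_k}{(b_1,\dots,b_s;q)_k}(-1)^{(1+s-r)k}q^{(1+s-r)\binom{k}{2}}\frac{z^k}{(q;q)_k};$$ when one numerator parameter is $q^{-n}$ it is a polynomial in $z$ of degree at most $n$. *)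

From Stdlib Require Import Reals Lra Lia ZArith List.
From Coquelicot Require Import Coquelicot.
Open Scope R_scope.

(* q^w := e^{w ln q} for complex w, written out: exp(Re w ln q) (cos(Im w ln q) + i sin(Im w ln q)). *)
Definition qpow (q : R) (w : C) : C :=
  (exp (Re w * ln q) * cos (Im w * ln q), exp (Re w * ln q) * sin (Im w * ln q)).

Fixpoint qpoch (a : C) (q : R) (k : nat) : C :=
  match k with
  | O => RtoC 1
  | S k' => Cmult (qpoch a q k') (Cminus (RtoC 1) (Cmult a (RtoC (q ^ k'))))
  end.

Definition qpoch_list (l : list C) (q : R) (k : nat) : C :=
  fold_right Cmult (RtoC 1) (map (fun a => qpoch a q k) l).

Definition binom2 (k : nat) : nat := (k * (k - 1) / 2)%nat.

Definition phi_term (num den : list C) (q : R) (z : C) (k : nat) : C :=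
  let r := Z.of_nat (length num) in
  let s := Z.of_nat (length den) in
  Cmult (Cdiv (qpoch_list num q k) (qpoch_list den q k))
   (Cmult (RtoC (powerRZ (-1) ((1 + s - r) * Z.of_nat k)%Z
                 * powerRZ q ((1 + s - r) * Z.of_nat (binom2 k))%Z))
          (Cdiv (pow_n z k) (qpoch (RtoC q) q k))).

Definition rphis (num den : list C) (q : R) (z : C) : C :=
  (real (Lim_seq (fun N => Re (sum_n (phi_term num den q z) N))),
   real (Lim_seq (fun N => Im (sum_n (phi_term num den q z) N)))).


Definition qnum (p x : R) : R := (1 - Rpower p x) / (1 - p).

Definition rprod (m : nat) (f : nat -> R) : R :=
  fold_right Rmult 1 (map f (seq 0 m)).

From Stdlib Require Import Reals Lra Lia ZArith List.
From Coquelicot Require Import Coquelicot.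
Open Scope R_scope.

(* The series [phi_n] terminates, and its k-th term contains
     (q^-n; q)_k lambda_n^k = prod_(j<k) (q^n - q^j) * (lambda_n q^-n)^k.
   As n -> oo the product tends to (-1)^k q^(k(k-1)/2), lambda_n q^-n tends to
   -q^alpha A (1-q)^(2+r-s), and the parameters q^(a_j n + b_j), q^(c_l n + d_l) tend to 0,
   so every term converges to the corresponding term of the right-hand side.  For large n
   the product is bounded by q^(k(k-1)/2) while the other factors grow at most geometrically
   in k: this gives a summable majorant, and dominated convergence for series (Tannery's
   theorem) lets the limit pass through the sum. *)

(** * Complex sequences *)

Definition is_lim_Cseq (u : nat -> C) (l : C) : Prop :=
  is_lim_seq (fun n => Cmod (Cminus (u n) l)) 0.

Lemma eventually_Rabs_lt (u : nat -> R) :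
  is_lim_seq u 0 -> forall eps, 0 < eps -> eventually (fun n => Rabs (u n) < eps).
Proof.
  intros H eps Heps. apply is_lim_seq_spec in H.
  eapply filter_imp; [|exact (H (mkposreal eps Heps))].
  intros n Hn. simpl in Hn. now rewrite Rminus_0_r in Hn.
Qed.

Lemma eventually_forall_lt (P : nat -> nat -> Prop) m :
  (forall j, (j < m)%nat -> eventually (P j)) ->
  eventually (fun n => forall j, (j < m)%nat -> P j n).
Proof.
  induction m as [|m IH]; intros H.
  - apply filter_forall. intros n j Hj; lia.
  - assert (Hlt := IH (fun j Hj => H j ltac:(lia))). assert (Hm := H m ltac:(lia)).
    eapply filter_imp; [|exact (filter_and _ _ Hlt Hm)].
    intros n [Hn1 Hn2] j Hj. destruct (Nat.eq_dec j m) as [->|Hne]; [exact Hn2|apply Hn1; lia].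
Qed.

Lemma is_lim_seq_0_le (u w : nat -> R) :
  eventually (fun n => u n <= w n) -> (forall n, 0 <= u n) ->
  is_lim_seq w 0 -> is_lim_seq u 0.
Proof.
  intros Hle Hpos Hw. apply is_lim_seq_le_le_loc with (u := fun _ => 0) (w := w).
  - eapply filter_imp; [|exact Hle]. intros n Hn. split; [apply Hpos|exact Hn].
  - apply is_lim_seq_const.
  - exact Hw.
Qed.

Lemma is_lim_Cseq_const (c : C) : is_lim_Cseq (fun _ => c) c.
Proof.
  unfold is_lim_Cseq. replace (Cminus c c) with (RtoC 0) by ring. rewrite Cmod_0.
  apply is_lim_seq_const.
Qed.

Lemma is_lim_Cseq_ext_loc u v l :
  eventually (fun n => u n = v n) -> is_lim_Cseq u l -> is_lim_Cseq v l.
Proof.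
  intros Huv H. eapply is_lim_seq_ext_loc; [|exact H].
  eapply filter_imp; [|exact Huv]. intros n Hn; simpl. now rewrite Hn.
Qed.

Lemma is_lim_Cseq_RtoC (u : nat -> R) (l : R) :
  is_lim_seq u l -> is_lim_Cseq (fun n => RtoC (u n)) (RtoC l).
Proof.
  intros H. unfold is_lim_Cseq.
  apply is_lim_seq_ext with (u := fun n => Rabs (u n - l)).
  { intros n. rewrite <- Cmod_R. f_equal. unfold RtoC, Cminus, Cplus, Copp; simpl. f_equal; ring. }
  replace 0 with (Rabs (l - l)) by (rewrite Rminus_diag; apply Rabs_R0).
  apply (is_lim_seq_abs _ (l - l)), is_lim_seq_minus'; [exact H|apply is_lim_seq_const].
Qed.

Lemma is_lim_Cseq_mult u v a b :
  is_lim_Cseq u a -> is_lim_Cseq v b ->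
  is_lim_Cseq (fun n => Cmult (u n) (v n)) (Cmult a b).
Proof.
  unfold is_lim_Cseq. intros Hu Hv.
  apply is_lim_seq_0_le with (w := fun n =>
    Cmod (Cminus (u n) a) * (Cmod (Cminus (v n) b) + Cmod b) + Cmod a * Cmod (Cminus (v n) b)).
  - apply filter_forall. intros n.
    replace (Cminus (Cmult (u n) (v n)) (Cmult a b)) with
      (Cplus (Cmult (Cminus (u n) a) (Cplus (Cminus (v n) b) b)) (Cmult a (Cminus (v n) b)))
      by ring.
    eapply Rle_trans; [apply Cmod_triangle|]. rewrite !Cmod_mult.
    apply Rplus_le_compat_r, Rmult_le_compat_l; [apply Cmod_ge_0|apply Cmod_triangle].
  - intros; apply Cmod_ge_0.
  - replace 0 with (0 * (0 + Cmod b) + Cmod a * 0) by ring.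
    apply is_lim_seq_plus'; apply is_lim_seq_mult'; try assumption; try apply is_lim_seq_const.
    apply is_lim_seq_plus'; [exact Hv|apply is_lim_seq_const].
Qed.

Lemma is_lim_Cseq_minus u v a b :
  is_lim_Cseq u a -> is_lim_Cseq v b ->
  is_lim_Cseq (fun n => Cminus (u n) (v n)) (Cminus a b).
Proof.
  unfold is_lim_Cseq. intros Hu Hv.
  apply is_lim_seq_0_le with (w := fun n => Cmod (Cminus (u n) a) + Cmod (Cminus (v n) b)).
  - apply filter_forall. intros n.
    replace (Cminus (Cminus (u n) (v n)) (Cminus a b))
      with (Cplus (Cminus (u n) a) (Copp (Cminus (v n) b))) by ring.
    eapply Rle_trans; [apply Cmod_triangle|]. rewrite Cmod_opp. lra.
  - intros; apply Cmod_ge_0.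
  - replace 0 with (0 + 0) by ring. apply is_lim_seq_plus'; assumption.
Qed.

Lemma is_lim_Cseq_inv v b :
  is_lim_Cseq v b -> b <> RtoC 0 -> is_lim_Cseq (fun n => Cinv (v n)) (Cinv b).
Proof.
  unfold is_lim_Cseq. intros Hv Hb.
  assert (Hbpos : 0 < Cmod b) by (apply Cmod_gt_0; exact Hb).
  apply is_lim_seq_0_le with (w := fun n => Cmod (Cminus (v n) b) * (2 / (Cmod b * Cmod b))).
  - eapply filter_imp; [|exact (eventually_Rabs_lt _ Hv (Cmod b / 2) ltac:(lra))].
    intros n Hn. cbv beta in Hn. rewrite Rabs_pos_eq in Hn by apply Cmod_ge_0.
    assert (Hvn : Cmod b / 2 <= Cmod (v n)).
    { assert (Cmod b <= Cmod (v n) + Cmod (Cminus (v n) b)).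
      { replace b with (Cplus (v n) (Copp (Cminus (v n) b))) at 1 by ring.
        rewrite <- (Cmod_opp (Cminus (v n) b)). apply Cmod_triangle. }
      lra. }
    assert (Hv0 : v n <> RtoC 0) by (intros E; rewrite E, Cmod_0 in Hvn; lra).
    replace (Cminus (Cinv (v n)) (Cinv b)) with (Cdiv (Copp (Cminus (v n) b)) (Cmult (v n) b))
      by (field; split; assumption).
    rewrite Cmod_div, Cmod_opp, Cmod_mult.
    2:{ apply Cmult_neq_0; assumption. }
    unfold Rdiv. apply Rmult_le_compat_l; [apply Cmod_ge_0|].
    replace (2 * / (Cmod b * Cmod b)) with (/ (Cmod b / 2 * Cmod b)) by (field; lra).
    apply Rinv_le_contravar; [nra|]. apply Rmult_le_compat_r; lra.
  - intros; apply Cmod_ge_0.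
  - replace 0 with (0 * (2 / (Cmod b * Cmod b))) by ring.
    apply is_lim_seq_mult'; [exact Hv|apply is_lim_seq_const].
Qed.

Lemma Rabs_Im_le_Cmod (x : C) : Rabs (Im x) <= Cmod x.
Proof.
  replace (Im x) with (Re (Cmult (0, -1) x)) by (destruct x; unfold Cmult, Re, Im; simpl; ring).
  eapply Rle_trans; [apply re_le_Cmod|]. rewrite Cmod_mult.
  replace (Cmod (0, -1)) with 1; [lra|].
  unfold Cmod; simpl. replace (0 * (0 * 1) + -1 * (-1 * 1)) with 1 by ring. now rewrite sqrt_1.
Qed.

Lemma is_lim_Cseq_Re u l : is_lim_Cseq u l -> is_lim_seq (fun n => Re (u n)) (Re l).
Proof.
  intros H. apply is_lim_seq_spec. intros eps.
  eapply filter_imp; [|exact (eventually_Rabs_lt _ H eps (cond_pos eps))].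
  intros n Hn. cbv beta in Hn. rewrite Rabs_pos_eq in Hn by apply Cmod_ge_0.
  eapply Rle_lt_trans; [|exact Hn].
  replace (Re (u n) - Re l) with (Re (Cminus (u n) l))
    by (destruct (u n), l; unfold Cminus, Cplus, Copp, Re; simpl; ring).
  apply re_le_Cmod.
Qed.

Lemma is_lim_Cseq_Im u l : is_lim_Cseq u l -> is_lim_seq (fun n => Im (u n)) (Im l).
Proof.
  intros H. apply is_lim_seq_spec. intros eps.
  eapply filter_imp; [|exact (eventually_Rabs_lt _ H eps (cond_pos eps))].
  intros n Hn. cbv beta in Hn. rewrite Rabs_pos_eq in Hn by apply Cmod_ge_0.
  eapply Rle_lt_trans; [|exact Hn].
  replace (Im (u n) - Im l) with (Im (Cminus (u n) l))
    by (destruct (u n), l; unfold Cminus, Cplus, Copp, Im; simpl; ring).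
  apply Rabs_Im_le_Cmod.
Qed.

Lemma filterlim_C_Re_Im (u : nat -> C) (x y : R) :
  is_lim_seq (fun n => Re (u n)) x -> is_lim_seq (fun n => Im (u n)) y ->
  filterlim u eventually (locally ((x, y) : C)).
Proof.
  intros Hx Hy P [eps HP].
  assert (Bx := Hx _ (locally_ball x eps)). assert (By := Hy _ (locally_ball y eps)).
  unfold filtermap in *.
  eapply filter_imp; [|exact (filter_and _ _ Bx By)].
  intros n [Hbx Hby]. apply HP. split; assumption.
Qed.

Lemma Re_sum_n (u : nat -> C) N : Re (sum_n u N) = sum_n (fun k => Re (u k)) N.
Proof. induction N as [|N IH]; [now rewrite !sum_O|]. rewrite !sum_Sn, <- IH. reflexivity. Qed.

Lemma Im_sum_n (u : nat -> C) N : Im (sum_n u N) = sum_n (fun k => Im (u k)) N.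
Proof. induction N as [|N IH]; [now rewrite !sum_O|]. rewrite !sum_Sn, <- IH. reflexivity. Qed.

Lemma rphis_Series num den q z :
  rphis num den q z =
  (Series (fun k => Re (phi_term num den q z k)), Series (fun k => Im (phi_term num den q z k))).
Proof.
  unfold rphis, Series. f_equal; f_equal; apply Lim_seq_ext; intros N;
    [apply Re_sum_n|apply Im_sum_n].
Qed.

(** * Dominated convergence for series *)

Lemma ex_series_Rabs_le (u M : nat -> R) :
  (forall k, Rabs (u k) <= M k) -> ex_series M -> ex_series u.
Proof.
  intros H HM. apply ex_series_Rabs, (ex_series_le (fun k => Rabs (u k)) M); [|exact HM].
  intros k. unfold norm; simpl. unfold abs; simpl. rewrite Rabs_Rabsolu. apply H.
Qed.

Lemma is_lim_seq_sum_f_R0 (f : nat -> nat -> R) (g : nat -> R) K :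
  (forall k, is_lim_seq (fun n => f n k) (g k)) ->
  is_lim_seq (fun n => sum_f_R0 (f n) K) (sum_f_R0 g K).
Proof.
  intros H. induction K as [|K IH]; simpl; [apply H|]. apply is_lim_seq_plus'; [exact IH|apply H].
Qed.

Lemma Series_tail_small (M : nat -> R) : ex_series M -> forall eps, 0 < eps ->
  exists K, Series (fun k => M (S K + k)%nat) = Series M - sum_f_R0 M K /\
            Rabs (Series M - sum_f_R0 M K) < eps.
Proof.
  intros HM eps Heps.
  assert (Hl : is_lim_seq (sum_n M) (Series M)) by exact (Series_correct _ HM).
  apply is_lim_seq_spec in Hl. destruct (Hl (mkposreal eps Heps)) as [K HK].
  exists K. split.
  - rewrite (Series_incr_n M (S K)) by (lia || exact HM). simpl. ring.
  - specialize (HK K (le_n _)). rewrite sum_n_Reals in HK. now rewrite Rabs_minus_sym.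
Qed.

Lemma Rabs_Series_tail_le (u M : nat -> R) K :
  ex_series M -> (forall k, Rabs (u k) <= M k) ->
  Rabs (Series (fun k => u (S K + k)%nat)) <= Series (fun k => M (S K + k)%nat).
Proof.
  intros HM Hu.
  assert (HMt : ex_series (fun k => M (S K + k)%nat)) by (apply ex_series_incr_n; exact HM).
  eapply Rle_trans; [apply Series_Rabs|].
  - apply (ex_series_Rabs_le _ (fun k => M (S K + k)%nat)); [|exact HMt].
    intros k. rewrite Rabs_Rabsolu. apply Hu.
  - apply Series_le; [|exact HMt]. intros k. split; [apply Rabs_pos|apply Hu].
Qed.

Lemma tannery (f : nat -> nat -> R) (g M : nat -> R) N :
  (forall k, is_lim_seq (fun n => f n k) (g k)) ->
  (forall n k, (N <= n)%nat -> Rabs (f n k) <= M k) ->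
  ex_series M ->
  ex_series g /\ is_lim_seq (fun n => Series (f n)) (Series g).
Proof.
  intros Hlim Hf HM.
  assert (Hg : forall k, Rabs (g k) <= M k).
  { intros k. apply (is_lim_seq_le_loc (fun n => Rabs (f n k)) (fun _ => M k) (Rabs (g k)) (M k)).
    - exists N. intros n Hn. now apply Hf.
    - apply (is_lim_seq_abs _ (g k)), Hlim.
    - apply is_lim_seq_const. }
  assert (Hgs : ex_series g) by exact (ex_series_Rabs_le g M Hg HM).
  split; [exact Hgs|].
  apply is_lim_seq_spec. intros eps.
  destruct (Series_tail_small M HM (eps / 4) ltac:(destruct eps; simpl; lra)) as [K [HT1 HT2]].
  assert (Hsum := is_lim_seq_sum_f_R0 f g K Hlim). apply is_lim_seq_spec in Hsum.
  destruct (Hsum (mkposreal (eps / 2) ltac:(destruct eps; simpl; lra))) as [N1 HN1].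
  exists (max N N1). intros n Hn.
  assert (HnN : (N <= n)%nat) by lia. specialize (HN1 n ltac:(lia)). simpl in HN1.
  assert (Hfs : ex_series (f n)) by exact (ex_series_Rabs_le (f n) M (fun k => Hf n k HnN) HM).
  rewrite (Series_incr_n (f n) (S K)), (Series_incr_n g (S K)) by (lia || assumption). simpl.
  assert (Tf := Rabs_Series_tail_le (f n) M K HM (fun k => Hf n k HnN)).
  assert (Tg := Rabs_Series_tail_le g M K HM Hg).
  rewrite HT1 in Tf, Tg. simpl in Tf, Tg.
  set (u := Series (fun k => f n (S (K + k)))) in *. set (v := Series (fun k => g (S (K + k)))) in *.
  assert (Rabs (u - v) <= Rabs u + Rabs v)
    by (eapply Rle_trans; [apply Rabs_triang|]; rewrite Rabs_Ropp; lra).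
  replace (sum_f_R0 (f n) K + u - (sum_f_R0 g K + v))
    with ((sum_f_R0 (f n) K - sum_f_R0 g K) + (u - v)) by ring.
  eapply Rle_lt_trans; [apply Rabs_triang|].
  assert (Rabs (Series M - sum_f_R0 M K) >= Series M - sum_f_R0 M K) by (apply Rle_ge, Rle_abs).
  destruct eps; simpl in *. lra.
Qed.

Lemma tannery_C (f : nat -> nat -> C) (g : nat -> C) (M : nat -> R) N :
  (forall k, is_lim_Cseq (fun n => f n k) (g k)) ->
  (forall n k, (N <= n)%nat -> Cmod (f n k) <= M k) ->
  ex_series M ->
  exists L : C, is_series g L /\
    filterlim (fun n => (Series (fun k => Re (f n k)), Series (fun k => Im (f n k))) : C)
      eventually (locally L).
Proof.
  intros Hlim Hf HM.
  destruct (tannery (fun n k => Re (f n k)) (fun k => Re (g k)) M N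
    (fun k => is_lim_Cseq_Re _ _ (Hlim k))
    (fun n k Hn => Rle_trans _ _ _ (re_le_Cmod _) (Hf n k Hn)) HM) as [HgRe HlimRe].
  destruct (tannery (fun n k => Im (f n k)) (fun k => Im (g k)) M N
    (fun k => is_lim_Cseq_Im _ _ (Hlim k))
    (fun n k Hn => Rle_trans _ _ _ (Rabs_Im_le_Cmod _) (Hf n k Hn)) HM) as [HgIm HlimIm].
  exists (Series (fun k => Re (g k)), Series (fun k => Im (g k))). split.
  - apply filterlim_C_Re_Im.
    + eapply is_lim_seq_ext; [intros K; symmetry; apply Re_sum_n|]. exact (Series_correct _ HgRe).
    + eapply is_lim_seq_ext; [intros K; symmetry; apply Im_sum_n|]. exact (Series_correct _ HgIm).
  - apply filterlim_C_Re_Im; assumption.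
Qed.

Lemma pow_le_1 x n : 0 <= x <= 1 -> x ^ n <= 1.
Proof. intros Hx. rewrite <- (pow1 n). apply pow_incr. exact Hx. Qed.

Lemma is_lim_seq_pow (u : nat -> R) (l : R) k :
  is_lim_seq u l -> is_lim_seq (fun n => u n ^ k) (l ^ k).
Proof.
  intros H. induction k as [|k IH]; simpl; [apply is_lim_seq_const|].
  apply is_lim_seq_mult'; assumption.
Qed.

Lemma binom2_S k : binom2 (S k) = (binom2 k + k)%nat.
Proof.
  unfold binom2. replace (S k * (S k - 1))%nat with (k * (k - 1) + k * 2)%nat.
  - apply Nat.div_add. lia.
  - destruct k; simpl; [reflexivity|]. rewrite Nat.sub_0_r. nia.
Qed.

Lemma powerRZ_mul_nat x e k : x <> 0 -> powerRZ x (e * Z.of_nat k) = powerRZ x e ^ k.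
Proof.
  intros Hx. induction k as [|k IH]; [simpl; now rewrite Z.mul_0_r|].
  rewrite Nat2Z.inj_succ, Z.mul_succ_r, powerRZ_add, IH by exact Hx. simpl. ring.
Qed.

Lemma powerRZ_m1_mul_self e : powerRZ (-1) e * powerRZ (-1) e = 1.
Proof. rewrite <- powerRZ_mult. replace (-1 * -1) with 1 by ring. apply powerRZ_R1. Qed.

Lemma Rabs_powerRZ_m1 e : Rabs (powerRZ (-1) e) = 1.
Proof.
  assert (H : Rabs (powerRZ (-1) e) * Rabs (powerRZ (-1) e) = 1)
    by now rewrite <- Rabs_mult, powerRZ_m1_mul_self, Rabs_R1.
  assert (0 <= Rabs (powerRZ (-1) e)) by apply Rabs_pos. nra.
Qed.

Lemma powerRZ_m1_add_even e m : powerRZ (-1) (e + 2 * m) = powerRZ (-1) e.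
Proof.
  replace (2 * m)%Z with (m + m)%Z by ring.
  rewrite !powerRZ_add, powerRZ_m1_mul_self by lra. ring.
Qed.

Lemma powerRZ_le_1 q e : 0 < q < 1 -> (0 <= e)%Z -> 0 <= powerRZ q e <= 1.
Proof.
  intros Hq He. rewrite <- (Z2Nat.id e He), <- pow_powerRZ.
  split; [apply pow_le; lra|apply pow_le_1; lra].
Qed.

(** * Real q-products *)

Fixpoint rqpoch (x q : R) (k : nat) : R :=
  match k with O => 1 | S k' => rqpoch x q k' * (1 - x * q ^ k') end.

Lemma qpoch_RtoC x q k : qpoch (RtoC x) q k = RtoC (rqpoch x q k).
Proof.
  induction k as [|k IH]; simpl; [reflexivity|]. rewrite IH.
  unfold RtoC, Cmult, Cminus, Cplus, Copp; simpl. f_equal; ring.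
Qed.

Lemma rqpoch_neq0 x q k : (forall j, x * q ^ j <> 1) -> rqpoch x q k <> 0.
Proof.
  intros H. induction k as [|k IH]; simpl; [lra|].
  apply Rmult_integral_contrapositive. specialize (H k). split; [exact IH|lra].
Qed.

Lemma ln_lt_0 q : 0 < q < 1 -> ln q < 0.
Proof. intros Hq. rewrite <- ln_1. apply ln_increasing; lra. Qed.

Lemma rqpoch_Rpower_neq0 q x k : 0 < q < 1 -> (forall m : nat, x <> - INR m) ->
  rqpoch (Rpower q x) q k <> 0.
Proof.
  intros Hq Hx. apply rqpoch_neq0. intros j E.
  rewrite <- Rpower_pow, <- Rpower_plus in E by lra.
  unfold Rpower in E. rewrite <- exp_0 in E. apply exp_inv, Rmult_integral in E.
  assert (ln q < 0) by (apply ln_lt_0; exact Hq).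
  destruct E as [E|E]; [apply (Hx j); lra|lra].
Qed.

Lemma rqpoch_q_neq0 q k : 0 < q < 1 -> rqpoch q q k <> 0.
Proof.
  intros Hq. replace q with (Rpower q 1) at 1 by (apply Rpower_1; lra).
  apply rqpoch_Rpower_neq0; [exact Hq|].
  intros m. assert (0 <= INR m) by apply pos_INR. lra.
Qed.

Fixpoint qprod_diff (x q : R) (k : nat) : R :=
  match k with O => 1 | S k' => qprod_diff x q k' * (x - q ^ k') end.

Lemma rqpoch_inv_mul_pow x q k : x <> 0 -> rqpoch (/ x) q k * x ^ k = qprod_diff x q k.
Proof. intros Hx. induction k as [|k IH]; simpl; [ring|]. rewrite <- IH. field. exact Hx. Qed.

Lemma is_lim_seq_qprod_diff q k (u : nat -> R) :
  is_lim_seq u 0 -> is_lim_seq (fun n => qprod_diff (u n) q k) (qprod_diff 0 q k).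
Proof.
  intros H. induction k as [|k IH]; simpl; [apply is_lim_seq_const|].
  apply is_lim_seq_mult'; [exact IH|]. apply is_lim_seq_minus'; [exact H|apply is_lim_seq_const].
Qed.

Lemma qprod_diff_0 q k : qprod_diff 0 q k = (-1) ^ k * q ^ binom2 k.
Proof.
  induction k as [|k IH]; simpl; [unfold binom2; simpl; ring|].
  rewrite IH, binom2_S, pow_add. ring.
Qed.

Lemma qprod_diff_pow_eq0 q n k : (n < k)%nat -> qprod_diff (q ^ n) q k = 0.
Proof.
  induction k as [|k IH]; intros Hk; [lia|]. simpl.
  destruct (Nat.eq_dec n k) as [->|Hne].
  - rewrite Rminus_diag. ring.
  - rewrite IH by lia. ring.
Qed.

Lemma Rabs_qprod_diff_pow_le q n k : 0 < q < 1 -> Rabs (qprod_diff (q ^ n) q k) <= q ^ binom2 k.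
Proof.
  intros Hq. destruct (Nat.lt_ge_cases n k) as [H|H].
  { rewrite qprod_diff_pow_eq0, Rabs_R0 by exact H. apply pow_le; lra. }
  induction k as [|k IH]; simpl.
  - rewrite Rabs_R1. unfold binom2; simpl. lra.
  - rewrite binom2_S, pow_add, Rabs_mult.
    apply Rmult_le_compat; try apply Rabs_pos; [apply IH; lia|].
    assert (q ^ n <= q ^ k).
    { replace n with (k + (n - k))%nat by lia. rewrite pow_add.
      assert (0 <= q ^ k) by (apply pow_le; lra). assert (q ^ (n - k) <= 1) by (apply pow_le_1; lra).
      assert (0 <= q ^ (n - k)) by (apply pow_le; lra). nra. }
    assert (0 <= q ^ n) by (apply pow_le; lra).
    rewrite Rabs_left1 by lra. lra.
Qed.

(* Ratio test: consecutive terms have ratio [C0 q^k / |(1 - x q^k) (1 - y q^k)|] -> 0. *)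
Lemma ex_series_qgauss q x y C0 : 0 < q < 1 -> 0 < C0 ->
  (forall k, rqpoch x q k <> 0) -> (forall k, rqpoch y q k <> 0) ->
  ex_series (fun k => q ^ binom2 k * C0 ^ k / (Rabs (rqpoch x q k) * Rabs (rqpoch y q k))).
Proof.
  intros Hq HC0 Hx Hy. set (M := fun k => _).
  assert (HM : forall k, 0 < M k).
  { intros k. apply Rdiv_lt_0_compat; [apply Rmult_lt_0_compat; apply pow_lt; lra|].
    apply Rmult_lt_0_compat; apply Rabs_pos_lt; auto. }
  assert (Hfx : forall k, 1 - x * q ^ k <> 0) by (intros k E; apply (Hx (S k)); simpl; rewrite E; ring).
  assert (Hfy : forall k, 1 - y * q ^ k <> 0) by (intros k E; apply (Hy (S k)); simpl; rewrite E; ring).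
  apply ex_series_Rabs, (ex_series_DAlembert M 0); [lra|intros k; apply Rgt_not_eq, HM|].
  apply is_lim_seq_ext with (u := fun k => C0 * q ^ k / (Rabs (1 - x * q ^ k) * Rabs (1 - y * q ^ k))).
  { intros k. rewrite (Rabs_pos_eq (M (S k) / M k)) by (left; apply Rdiv_lt_0_compat; apply HM).
    unfold M. simpl rqpoch. rewrite binom2_S, pow_add. simpl pow. rewrite !Rabs_mult.
    assert (Rabs (rqpoch x q k) <> 0) by (apply Rabs_no_R0; auto).
    assert (Rabs (rqpoch y q k) <> 0) by (apply Rabs_no_R0; auto).
    assert (Rabs (1 - x * q ^ k) <> 0) by (apply Rabs_no_R0; auto).
    assert (Rabs (1 - y * q ^ k) <> 0) by (apply Rabs_no_R0; auto).
    assert (q ^ binom2 k <> 0) by (apply pow_nonzero; lra).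
    assert (C0 ^ k <> 0) by (apply pow_nonzero; lra).
    field. repeat split; assumption. }
  assert (Hg : is_lim_seq (fun k => q ^ k) 0) by (apply is_lim_seq_geom; rewrite Rabs_pos_eq; lra).
  assert (H : is_lim_seq (fun k => C0 * q ^ k / (Rabs (1 - x * q ^ k) * Rabs (1 - y * q ^ k)))
                (C0 * 0 / (Rabs (1 - x * 0) * Rabs (1 - y * 0)))).
  { apply is_lim_seq_div'.
    - apply is_lim_seq_mult'; [apply is_lim_seq_const|exact Hg].
    - apply is_lim_seq_mult';
        [apply (is_lim_seq_abs _ (1 - x * 0))|apply (is_lim_seq_abs _ (1 - y * 0))];
        (apply is_lim_seq_minus'; [apply is_lim_seq_const|]);
        (apply is_lim_seq_mult'; [apply is_lim_seq_const|exact Hg]).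
    - rewrite !Rmult_0_r, Rminus_0_r, Rabs_R1. lra. }
  replace (C0 * 0 / (Rabs (1 - x * 0) * Rabs (1 - y * 0))) with 0 in H by (unfold Rdiv; ring).
  exact H.
Qed.

Lemma map_seq_S {T} (f : nat -> T) m :
  map f (seq 0 (S m)) = f 0%nat :: map (fun j => f (S j)) (seq 0 m).
Proof. simpl. f_equal. rewrite <- seq_shift, map_map. reflexivity. Qed.

Lemma rprod_S m f : rprod (S m) f = f 0%nat * rprod m (fun j => f (S j)).
Proof. unfold rprod. rewrite map_seq_S. reflexivity. Qed.

Lemma rprod_mult m f g : rprod m (fun j => f j * g j) = rprod m f * rprod m g.
Proof.
  revert f g. induction m as [|m IH]; intros f g; [unfold rprod; simpl; ring|].
  rewrite !rprod_S, IH. ring.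
Qed.

Lemma rprod_inv m f : rprod m (fun j => / f j) = / rprod m f.
Proof.
  revert f. induction m as [|m IH]; intros f; [unfold rprod; simpl; now rewrite Rinv_1|].
  rewrite !rprod_S, IH, Rinv_mult. reflexivity.
Qed.

Lemma rprod_const m x : rprod m (fun _ => x) = x ^ m.
Proof. induction m as [|m IH]; [reflexivity|]. rewrite rprod_S, IH. reflexivity. Qed.

Lemma rprod_pos m f : (forall j, (j < m)%nat -> 0 < f j) -> 0 < rprod m f.
Proof.
  revert f. induction m as [|m IH]; intros f H; [unfold rprod; simpl; lra|].
  rewrite rprod_S. apply Rmult_lt_0_compat; [apply H; lia|]. apply IH. intros j Hj; apply H; lia.
Qed.

Lemma is_lim_seq_rprod m (f : nat -> nat -> R) (g : nat -> R) :
  (forall j, (j < m)%nat -> is_lim_seq (fun n => f n j) (g j)) ->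
  is_lim_seq (fun n => rprod m (f n)) (rprod m g).
Proof.
  revert f g. induction m as [|m IH]; intros f g H.
  - unfold rprod; simpl. apply is_lim_seq_const.
  - rewrite rprod_S. apply is_lim_seq_ext with (u := fun n => f n 0%nat * rprod m (fun j => f n (S j))).
    { intros n. now rewrite rprod_S. }
    apply is_lim_seq_mult'; [apply H; lia|].
    apply (IH (fun n j => f n (S j)) (fun j => g (S j))). intros j Hj. apply H. lia.
Qed.

Lemma is_lim_seq_exp_lin q a B : 0 < q < 1 -> 0 < a ->
  is_lim_seq (fun n => exp ((a * INR n + B) * ln q)) 0.
Proof.
  intros Hq Ha. assert (Hl := ln_lt_0 q Hq).
  apply is_lim_seq_ext with (u := fun n => exp (B * ln q) * exp (a * ln q) ^ n).
  { intros n. rewrite <- Rpower_pow by apply exp_pos. unfold Rpower.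
    rewrite ln_exp, <- exp_plus. f_equal. ring. }
  replace 0 with (exp (B * ln q) * 0) by ring. apply is_lim_seq_mult'; [apply is_lim_seq_const|].
  apply is_lim_seq_geom. rewrite Rabs_pos_eq by (left; apply exp_pos).
  rewrite <- exp_0. apply exp_increasing. nra.
Qed.

Lemma Rpower_lt_1 q x : 0 < q < 1 -> 0 < x -> 0 < Rpower q x < 1.
Proof.
  intros Hq Hx. unfold Rpower. split; [apply exp_pos|]. rewrite <- exp_0. apply exp_increasing.
  assert (ln q < 0) by (apply ln_lt_0; exact Hq). nra.
Qed.

Lemma is_lim_seq_qnum q x : 0 < q < 1 -> 0 < x ->
  is_lim_seq (fun n => qnum (Rpower q x) (INR n)) (/ (1 - Rpower q x)).
Proof.
  intros Hq Hx.
  apply is_lim_seq_ext with (u := fun n => (1 - exp ((x * INR n + 0) * ln q)) * / (1 - Rpower q x)).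
  { intros n. unfold qnum, Rdiv. rewrite Rpower_mult. unfold Rpower. do 3 f_equal. ring. }
  assert (H : is_lim_seq (fun n => (1 - exp ((x * INR n + 0) * ln q)) * / (1 - Rpower q x))
                ((1 - 0) * / (1 - Rpower q x))).
  { apply is_lim_seq_mult'; [|apply is_lim_seq_const].
    apply is_lim_seq_minus'; [apply is_lim_seq_const|]. now apply is_lim_seq_exp_lin. }
  now rewrite Rminus_0_r, Rmult_1_l in H.
Qed.

Lemma is_lim_seq_rprod_qnum q m (x : nat -> R) : 0 < q < 1 ->
  (forall j, (j < m)%nat -> 0 < x j) ->
  is_lim_seq (fun n => rprod m (fun j => qnum (Rpower q (x j)) (INR n)))
    (/ rprod m (fun j => 1 - Rpower q (x j))).
Proof.
  intros Hq Hx. rewrite <- rprod_inv. apply is_lim_seq_rprod.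
  intros j Hj. apply is_lim_seq_qnum; [exact Hq|apply Hx; exact Hj].
Qed.

(** * Complex q-Pochhammer symbols *)

Lemma Cinv_0 : Cinv (RtoC 0) = RtoC 0.
Proof. unfold Cinv, RtoC; simpl. f_equal; unfold Rdiv; ring. Qed.

Lemma Cinv_Cmult a b : Cinv (Cmult a b) = Cmult (Cinv a) (Cinv b).
Proof.
  destruct (Ceq_dec a (RtoC 0)) as [->|Ha]; [now rewrite Cmult_0_l, Cinv_0, Cmult_0_l|].
  destruct (Ceq_dec b (RtoC 0)) as [->|Hb]; [now rewrite Cmult_0_r, Cinv_0, Cmult_0_r|].
  field. split; assumption.
Qed.

Lemma pow_n_Cmult (x y : C) k : pow_n (Cmult x y) k = Cmult (pow_n x k) (pow_n y k).
Proof.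
  induction k as [|k IH]; simpl; [change (one : C) with (RtoC 1); ring|].
  rewrite IH. change (@mult C_Ring) with Cmult. ring.
Qed.

Lemma pow_n_RtoC x k : pow_n (RtoC x) k = RtoC (x ^ k).
Proof.
  induction k as [|k IH]; simpl; [reflexivity|]. rewrite IH. change (@mult C_Ring) with Cmult.
  now rewrite RtoC_mult.
Qed.

Lemma Cmod_pow_n x k : Cmod (pow_n x k) = Cmod x ^ k.
Proof.
  induction k as [|k IH]; simpl; [apply Cmod_1|]. change (@mult C_Ring) with Cmult.
  now rewrite Cmod_mult, IH.
Qed.

Lemma Cmod_qpow q w : Cmod (qpow q w) = exp (Re w * ln q).
Proof.
  unfold qpow, Cmod; simpl. set (e := exp (Re w * ln q)). set (t := Im w * ln q).
  replace (e * cos t * (e * cos t * 1) + e * sin t * (e * sin t * 1))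
    with (e * e * (Rsqr (sin t) + Rsqr (cos t))) by (unfold Rsqr; ring).
  rewrite sin2_cos2, Rmult_1_r. apply sqrt_square. unfold e; left; apply exp_pos.
Qed.

Lemma qpow_RtoC q x : qpow q (RtoC x) = RtoC (exp (x * ln q)).
Proof. unfold qpow, RtoC; simpl. rewrite Rmult_0_l, cos_0, sin_0. f_equal; ring. Qed.

Lemma is_lim_Cseq_qpow_lin q a b : 0 < q < 1 -> 0 < a ->
  is_lim_Cseq (fun n => qpow q (Cplus (RtoC (a * INR n)) b)) (RtoC 0).
Proof.
  intros Hq Ha. eapply is_lim_seq_ext; [|apply (is_lim_seq_exp_lin q a (Re b) Hq Ha)].
  intros n. cbv beta. replace (Cminus _ (RtoC 0)) with (qpow q (Cplus (RtoC (a * INR n)) b)) by ring.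
  now rewrite Cmod_qpow.
Qed.

Lemma is_lim_Cseq_qpoch xs x q k :
  is_lim_Cseq xs x -> is_lim_Cseq (fun n => qpoch (xs n) q k) (qpoch x q k).
Proof.
  intros H. induction k as [|k IH]; simpl; [apply is_lim_Cseq_const|].
  apply is_lim_Cseq_mult; [exact IH|].
  apply is_lim_Cseq_minus; [apply is_lim_Cseq_const|].
  apply is_lim_Cseq_mult; [exact H|apply is_lim_Cseq_const].
Qed.

Lemma qpoch_0 q k : qpoch (RtoC 0) q k = RtoC 1.
Proof.
  rewrite qpoch_RtoC. f_equal.
  induction k as [|k IH]; simpl; [reflexivity|]. rewrite IH. ring.
Qed.

Lemma is_lim_Cseq_qpoch_list (f : nat -> nat -> C) m q k :
  (forall j, (j < m)%nat -> is_lim_Cseq (fun n => f n j) (RtoC 0)) ->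
  is_lim_Cseq (fun n => qpoch_list (map (f n) (seq 0 m)) q k) (RtoC 1).
Proof.
  revert f. induction m as [|m IH]; intros f H; [unfold qpoch_list; simpl; apply is_lim_Cseq_const|].
  eapply is_lim_Cseq_ext_loc; [apply filter_forall; intros n; now rewrite map_seq_S|].
  replace (RtoC 1) with (Cmult (RtoC 1) (RtoC 1)) by ring.
  apply is_lim_Cseq_mult.
  - rewrite <- (qpoch_0 q k). apply is_lim_Cseq_qpoch, H. lia.
  - apply (IH (fun n j => f n (S j))). intros j Hj. apply H. lia.
Qed.

Lemma Cmod_qpoch_le x q k : 0 < q < 1 -> Cmod x <= 1 -> Cmod (qpoch x q k) <= 2 ^ k.
Proof.
  intros Hq Hx. induction k as [|k IH]; simpl; [rewrite Cmod_1; lra|].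
  rewrite Cmod_mult, (Rmult_comm 2).
  apply Rmult_le_compat; [apply Cmod_ge_0|apply Cmod_ge_0|exact IH|].
  unfold Cminus. eapply Rle_trans; [apply Cmod_triangle|].
  rewrite Cmod_opp, Cmod_1, Cmod_mult, Cmod_R, Rabs_pos_eq by (apply pow_le; lra).
  assert (q ^ k <= 1) by (apply pow_le_1; lra). assert (0 <= q ^ k) by (apply pow_le; lra).
  assert (0 <= Cmod x) by apply Cmod_ge_0. nra.
Qed.

Lemma Cmod_qpoch_ge x q k : 0 < q < 1 -> Cmod x <= / 2 -> (/ 2) ^ k <= Cmod (qpoch x q k).
Proof.
  intros Hq Hx. induction k as [|k IH]; simpl; [rewrite Cmod_1; lra|].
  rewrite Cmod_mult, (Rmult_comm (/ 2)).
  apply Rmult_le_compat; [apply pow_le; lra|lra|exact IH|].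
  assert (H1 : Cmod (RtoC 1) <= Cmod (Cminus (RtoC 1) (Cmult x (RtoC (q ^ k))))
                               + Cmod (Cmult x (RtoC (q ^ k)))).
  { replace (RtoC 1) with (Cplus (Cminus (RtoC 1) (Cmult x (RtoC (q ^ k)))) (Cmult x (RtoC (q ^ k))))
      at 1 by ring.
    apply Cmod_triangle. }
  rewrite Cmod_1, Cmod_mult, Cmod_R, Rabs_pos_eq in H1 by (apply pow_le; lra).
  assert (q ^ k <= 1) by (apply pow_le_1; lra). assert (0 <= q ^ k) by (apply pow_le; lra).
  assert (0 <= Cmod x) by apply Cmod_ge_0. nra.
Qed.

Lemma Cmod_qpoch_list_le l q k : 0 < q < 1 -> (forall x, In x l -> Cmod x <= 1) ->
  Cmod (qpoch_list l q k) <= (2 ^ k) ^ length l.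
Proof.
  intros Hq. induction l as [|x l IH]; intros H; unfold qpoch_list in *; simpl; [rewrite Cmod_1; lra|].
  rewrite Cmod_mult. apply Rmult_le_compat; [apply Cmod_ge_0|apply Cmod_ge_0| |].
  - apply Cmod_qpoch_le; [exact Hq|apply H; now left].
  - apply IH. intros y Hy; apply H; now right.
Qed.

Lemma Cmod_qpoch_list_ge l q k : 0 < q < 1 -> (forall x, In x l -> Cmod x <= / 2) ->
  ((/ 2) ^ k) ^ length l <= Cmod (qpoch_list l q k).
Proof.
  intros Hq. induction l as [|x l IH]; intros H; unfold qpoch_list in *; simpl; [rewrite Cmod_1; lra|].
  rewrite Cmod_mult. apply Rmult_le_compat; [apply pow_le; lra|apply pow_le, pow_le; lra| |].
  - apply Cmod_qpoch_ge; [exact Hq|apply H; now left].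
  - apply IH. intros y Hy; apply H; now right.
Qed.

Lemma eventually_Cmod_qpow_lin_le q m (a : nat -> R) (b : nat -> C) eps :
  0 < q < 1 -> 0 < eps -> (forall j, (j < m)%nat -> 0 < a j) ->
  eventually (fun n => forall j, (j < m)%nat ->
    Cmod (qpow q (Cplus (RtoC (a j * INR n)) (b j))) <= eps).
Proof.
  intros Hq Heps Ha.
  apply (eventually_forall_lt (fun j n => Cmod (qpow q (Cplus (RtoC (a j * INR n)) (b j))) <= eps)).
  intros j Hj.
  assert (Hj0 := is_lim_Cseq_qpow_lin q (a j) (b j) Hq (Ha j Hj)).
  eapply filter_imp; [|exact (eventually_Rabs_lt _ Hj0 eps Heps)].
  intros n Hn. cbv beta in Hn. rewrite Rabs_pos_eq in Hn by apply Cmod_ge_0.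
  replace (Cminus _ (RtoC 0)) with (qpow q (Cplus (RtoC (a j * INR n)) (b j))) in Hn by ring. lra.
Qed.

(** * The confluent limit *)

Section Confluence.

Variables (q alpha : R) (r s : nat) (a c : nat -> R) (b d : nat -> C) (z : C).
Hypothesis Hq : 0 < q < 1.
Hypothesis Hr : (1 <= r)%nat.
Hypothesis Hs : (1 <= s)%nat.
Hypothesis Hrs : (r - 1 <= s)%nat.
Hypothesis Halpha : forall m : nat, alpha <> - INR m.
Hypothesis Ha : forall j, (j < r - 1)%nat -> 0 < a j.
Hypothesis Hc : forall l, (l < s - 1)%nat -> 0 < c l.

Definition Acoef : R :=
  rprod (r - 1) (fun j => qnum q (a j)) / rprod (s - 1) (fun l => qnum q (c l)).

Definition lambda_n (n : nat) : R :=
  Rpower q (INR n + alpha) * rprod (s - 1) (fun l => qnum (Rpower q (c l)) (INR n))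
  / (qnum q (INR n) * rprod (r - 1) (fun j => qnum (Rpower q (a j)) (INR n)))
  * (q - 1).

Definition lambda_red (n : nat) : R :=
  Rpower q alpha * rprod (s - 1) (fun l => qnum (Rpower q (c l)) (INR n))
  / (qnum q (INR n) * rprod (r - 1) (fun j => qnum (Rpower q (a j)) (INR n)))
  * (q - 1).

Definition Lambda : R :=
  - Rpower q alpha * Acoef * powerRZ (1 - q) (2 + Z.of_nat r - Z.of_nat s).

Definition num_tail (n : nat) : list C :=
  map (fun j => qpow q (Cplus (RtoC (a j * INR n)) (b j))) (seq 0 (r - 1)).

Definition den_tail (n : nat) : list C :=
  map (fun l => qpow q (Cplus (RtoC (c l * INR n)) (d l))) (seq 0 (s - 1)).

Definition term (n k : nat) : C :=
  phi_term (qpow q (RtoC (- INR n)) :: num_tail n) (qpow q (RtoC alpha) :: den_tail n)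
    q (Cmult (RtoC (lambda_n n)) z) k.

Definition limit_term (k : nat) : C :=
  Cmult (RtoC (powerRZ (-1) ((1 + Z.of_nat r - Z.of_nat s) * Z.of_nat k)%Z
               * powerRZ q ((2 + Z.of_nat s - Z.of_nat r) * Z.of_nat (binom2 k))%Z
               * Acoef ^ k))
    (Cdiv (Cmult (pow_n z k)
                 (RtoC (Rpower q (alpha * INR k)
                        * powerRZ (1 - q) ((2 + Z.of_nat r - Z.of_nat s) * Z.of_nat k)%Z)))
          (Cmult (qpoch (qpow q (RtoC alpha)) q k) (qpoch (RtoC q) q k))).

Definition phi_extra (k : nat) : R :=
  powerRZ (-1) ((1 + Z.of_nat s - Z.of_nat r) * Z.of_nat k)
  * powerRZ q ((1 + Z.of_nat s - Z.of_nat r) * Z.of_nat (binom2 k)).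

Definition tail_ratio (n k : nat) : C :=
  Cmult (qpoch_list (num_tail n) q k) (Cinv (qpoch_list (den_tail n) q k)).

Definition common_factor (k : nat) : C :=
  Cmult (Cmult (RtoC (phi_extra k)) (pow_n z k))
    (Cinv (RtoC (rqpoch (Rpower q alpha) q k * rqpoch q q k))).

Lemma lambda_n_red n : lambda_n n = lambda_red n * q ^ n.
Proof.
  unfold lambda_n, lambda_red. rewrite Rpower_plus, Rpower_pow by lra. unfold Rdiv. ring.
Qed.

Lemma is_lim_seq_lambda_red : is_lim_seq lambda_red Lambda.
Proof.
  set (Pa := rprod (r - 1) (fun j => 1 - Rpower q (a j))).
  set (Pc := rprod (s - 1) (fun l => 1 - Rpower q (c l))).
  assert (HPa : 0 < Pa)
    by (apply rprod_pos; intros j Hj; assert (H := Rpower_lt_1 q (a j) Hq (Ha j Hj)); lra).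
  assert (HPc : 0 < Pc)
    by (apply rprod_pos; intros l Hl; assert (H := Rpower_lt_1 q (c l) Hq (Hc l Hl)); lra).
  replace Lambda with (Rpower q alpha * / Pc / (/ (1 - q) * / Pa) * (q - 1)).
  - unfold lambda_red. apply is_lim_seq_mult'; [|apply is_lim_seq_const].
    apply is_lim_seq_div'.
    + apply is_lim_seq_mult'; [apply is_lim_seq_const|]. now apply is_lim_seq_rprod_qnum.
    + apply is_lim_seq_mult'; [|now apply is_lim_seq_rprod_qnum].
      assert (H := is_lim_seq_qnum q 1 Hq ltac:(lra)). now rewrite Rpower_1 in H by lra.
    + apply Rgt_not_eq, Rmult_lt_0_compat; apply Rinv_0_lt_compat; lra.
  - assert (HA : Acoef = Pa * (/ (1 - q)) ^ (r - 1) / (Pc * (/ (1 - q)) ^ (s - 1))).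
    { unfold Acoef, Pa, Pc. rewrite <- !rprod_const, <- !rprod_mult. reflexivity. }
    unfold Lambda. rewrite HA.
    replace (2 + Z.of_nat r - Z.of_nat s)%Z with (Z.of_nat (2 + (r - 1)) + - Z.of_nat (s - 1))%Z
      by lia.
    rewrite powerRZ_add, powerRZ_neg', <- !pow_powerRZ, pow_add, !pow_inv by lra.
    field. repeat split; try lra; apply pow_nonzero; lra.
Qed.

Lemma term_factor n k :
  term n k = Cmult (Cmult (RtoC (qprod_diff (q ^ n) q k * lambda_red n ^ k)) (tail_ratio n k))
                   (common_factor k).
Proof.
  unfold term, phi_term. cbv zeta.
  assert (Lnum : length (qpow q (RtoC (- INR n)) :: num_tail n) = r)
    by (simpl; unfold num_tail; rewrite length_map, length_seq; lia).
  assert (Lden : length (qpow q (RtoC alpha) :: den_tail n) = s)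
    by (simpl; unfold den_tail; rewrite length_map, length_seq; lia).
  rewrite Lnum, Lden.
  change (qpoch_list (qpow q (RtoC (- INR n)) :: num_tail n) q k)
    with (Cmult (qpoch (qpow q (RtoC (- INR n))) q k) (qpoch_list (num_tail n) q k)).
  change (qpoch_list (qpow q (RtoC alpha) :: den_tail n) q k)
    with (Cmult (qpoch (qpow q (RtoC alpha)) q k) (qpoch_list (den_tail n) q k)).
  assert (Hqn : 0 < q ^ n) by (apply pow_lt; lra).
  rewrite !qpow_RtoC, !qpoch_RtoC, pow_n_Cmult, pow_n_RtoC, lambda_n_red.
  replace (exp (- INR n * ln q)) with (/ q ^ n).
  2:{ rewrite <- Rpower_pow by lra. unfold Rpower. rewrite <- exp_Ropp. f_equal. ring. }
  change (exp (alpha * ln q)) with (Rpower q alpha).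
  rewrite <- (rqpoch_inv_mul_pow (q ^ n) q k), Rpow_mult_distr by lra.
  unfold tail_ratio, common_factor, phi_extra, Cdiv.
  rewrite !RtoC_mult, !Cinv_Cmult. ring.
Qed.

Lemma limit_coef_eq k :
  powerRZ (-1) ((1 + Z.of_nat r - Z.of_nat s) * Z.of_nat k)
  * powerRZ q ((2 + Z.of_nat s - Z.of_nat r) * Z.of_nat (binom2 k)) * Acoef ^ k
  * (Rpower q (alpha * INR k) * powerRZ (1 - q) ((2 + Z.of_nat r - Z.of_nat s) * Z.of_nat k))
  = qprod_diff 0 q k * Lambda ^ k * phi_extra k.
Proof.
  rewrite qprod_diff_0. unfold Lambda, phi_extra.
  replace ((1 + Z.of_nat r - Z.of_nat s) * Z.of_nat k)%Z
    with ((1 + Z.of_nat s - Z.of_nat r) * Z.of_nat k + 2 * ((Z.of_nat r - Z.of_nat s) * Z.of_nat k))%Z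
    by ring.
  rewrite powerRZ_m1_add_even.
  replace ((2 + Z.of_nat s - Z.of_nat r) * Z.of_nat (binom2 k))%Z
    with (Z.of_nat (binom2 k) + (1 + Z.of_nat s - Z.of_nat r) * Z.of_nat (binom2 k))%Z by ring.
  rewrite powerRZ_add by lra.
  rewrite <- pow_powerRZ, <- Rpower_mult, Rpower_pow by (unfold Rpower; apply exp_pos).
  rewrite (powerRZ_mul_nat (1 - q)) by lra.
  replace (- Rpower q alpha * Acoef * powerRZ (1 - q) (2 + Z.of_nat r - Z.of_nat s))
    with ((-1) * (Rpower q alpha * Acoef * powerRZ (1 - q) (2 + Z.of_nat r - Z.of_nat s))) by ring.
  rewrite !Rpow_mult_distr.
  assert (Hsq : (-1) ^ k * (-1) ^ k = 1)
    by (rewrite <- Rpow_mult_distr; replace (-1 * -1) with 1 by ring; apply pow1).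
  set (P := powerRZ (1 - q) (2 + Z.of_nat r - Z.of_nat s)).
  set (e1 := powerRZ (-1) ((1 + Z.of_nat s - Z.of_nat r) * Z.of_nat k)).
  set (e2 := powerRZ q ((1 + Z.of_nat s - Z.of_nat r) * Z.of_nat (binom2 k))).
  transitivity ((-1) ^ k * (-1) ^ k
                * (q ^ binom2 k * (Rpower q alpha ^ k * Acoef ^ k * P ^ k) * (e1 * e2)));
    [rewrite Hsq|]; ring.
Qed.

Lemma limit_term_factor k :
  limit_term k = Cmult (RtoC (qprod_diff 0 q k * Lambda ^ k)) (common_factor k).
Proof.
  replace (Cmult (RtoC (qprod_diff 0 q k * Lambda ^ k)) (common_factor k))
    with (Cmult (Cmult (RtoC (qprod_diff 0 q k * Lambda ^ k * phi_extra k)) (pow_n z k))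
                (Cinv (RtoC (rqpoch (Rpower q alpha) q k * rqpoch q q k))))
    by (unfold common_factor; rewrite RtoC_mult; ring).
  rewrite <- limit_coef_eq. unfold limit_term, Cdiv.
  rewrite !qpow_RtoC, !qpoch_RtoC. change (exp (alpha * ln q)) with (Rpower q alpha).
  rewrite !RtoC_mult, !Cinv_Cmult. ring.
Qed.

Lemma is_lim_Cseq_term k : is_lim_Cseq (fun n => term n k) (limit_term k).
Proof.
  eapply is_lim_Cseq_ext_loc; [apply filter_forall; intros n; symmetry; apply term_factor|].
  rewrite limit_term_factor, <- (Cmult_1_r (RtoC (qprod_diff 0 q k * Lambda ^ k))).
  apply is_lim_Cseq_mult; [apply is_lim_Cseq_mult|apply is_lim_Cseq_const].
  - apply is_lim_Cseq_RtoC, is_lim_seq_mult'.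
    + apply is_lim_seq_qprod_diff, is_lim_seq_geom. rewrite Rabs_pos_eq; lra.
    + apply is_lim_seq_pow, is_lim_seq_lambda_red.
  - replace (RtoC 1) with (Cmult (RtoC 1) (Cinv (RtoC 1)))
      by (field; intros E; apply RtoC_inj in E; lra).
    unfold tail_ratio. apply is_lim_Cseq_mult; [|apply is_lim_Cseq_inv].
    + apply (is_lim_Cseq_qpoch_list (fun n j => qpow q (Cplus (RtoC (a j * INR n)) (b j)))).
      intros j Hj. apply is_lim_Cseq_qpow_lin; [exact Hq|now apply Ha].
    + apply (is_lim_Cseq_qpoch_list (fun n l => qpow q (Cplus (RtoC (c l * INR n)) (d l)))).
      intros l Hl. apply is_lim_Cseq_qpow_lin; [exact Hq|now apply Hc].
    + intros E. apply RtoC_inj in E. lra.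
Qed.

Definition growth : R := (Rabs Lambda + 1) * 2 ^ (r - 1) * 2 ^ (s - 1) * (Cmod z + 1).

Definition majorant (k : nat) : R :=
  q ^ binom2 k * growth ^ k / (Rabs (rqpoch (Rpower q alpha) q k) * Rabs (rqpoch q q k)).

Lemma rqpoch_alpha_neq0 k : rqpoch (Rpower q alpha) q k <> 0.
Proof. now apply rqpoch_Rpower_neq0. Qed.

Lemma Rabs_phi_extra_le k : Rabs (phi_extra k) <= 1.
Proof.
  unfold phi_extra. rewrite Rabs_mult, Rabs_powerRZ_m1, Rmult_1_l.
  assert (H := powerRZ_le_1 q ((1 + Z.of_nat s - Z.of_nat r) * Z.of_nat (binom2 k)) Hq
                 ltac:(apply Z.mul_nonneg_nonneg; lia)).
  rewrite Rabs_pos_eq; lra.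
Qed.

Lemma Cmod_common_factor_le k :
  Cmod (common_factor k)
  <= (Cmod z + 1) ^ k / (Rabs (rqpoch (Rpower q alpha) q k) * Rabs (rqpoch q q k)).
Proof.
  assert (Hrq : 0 < Rabs (rqpoch (Rpower q alpha) q k) * Rabs (rqpoch q q k)).
  { apply Rmult_lt_0_compat; apply Rabs_pos_lt; [apply rqpoch_alpha_neq0|now apply rqpoch_q_neq0]. }
  unfold common_factor. rewrite !Cmod_mult, Cmod_R, Cmod_pow_n, Cmod_inv, Cmod_R, Rabs_mult.
  2:{ intros E. apply RtoC_inj, Rmult_integral in E.
      destruct E; [apply (rqpoch_alpha_neq0 k)|apply (rqpoch_q_neq0 q k Hq)]; assumption. }
  unfold Rdiv. apply Rmult_le_compat_r; [left; now apply Rinv_0_lt_compat|].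
  rewrite <- (Rmult_1_l ((Cmod z + 1) ^ k)).
  apply Rmult_le_compat; [apply Rabs_pos|apply pow_le, Cmod_ge_0|apply Rabs_phi_extra_le|].
  apply pow_incr. split; [apply Cmod_ge_0|lra].
Qed.

Lemma Cmod_tail_ratio_le n k :
  (forall j, (j < r - 1)%nat -> Cmod (qpow q (Cplus (RtoC (a j * INR n)) (b j))) <= 1) ->
  (forall l, (l < s - 1)%nat -> Cmod (qpow q (Cplus (RtoC (c l * INR n)) (d l))) <= / 2) ->
  Cmod (tail_ratio n k) <= (2 ^ k) ^ (r - 1) * / ((/ 2) ^ k) ^ (s - 1).
Proof.
  intros Hnum Hden.
  assert (Hnum_le : Cmod (qpoch_list (num_tail n) q k) <= (2 ^ k) ^ (r - 1)).
  { replace (r - 1)%nat with (length (num_tail n))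
      by (unfold num_tail; now rewrite length_map, length_seq).
    apply Cmod_qpoch_list_le; [exact Hq|]. intros x Hx.
    unfold num_tail in Hx. apply in_map_iff in Hx. destruct Hx as [j [<- Hj]].
    apply in_seq in Hj. apply Hnum. lia. }
  assert (Hden_ge : ((/ 2) ^ k) ^ (s - 1) <= Cmod (qpoch_list (den_tail n) q k)).
  { replace (s - 1)%nat with (length (den_tail n))
      by (unfold den_tail; now rewrite length_map, length_seq).
    apply Cmod_qpoch_list_ge; [exact Hq|]. intros x Hx.
    unfold den_tail in Hx. apply in_map_iff in Hx. destruct Hx as [l [<- Hl]].
    apply in_seq in Hl. apply Hden. lia. }
  assert (Hpos : 0 < ((/ 2) ^ k) ^ (s - 1)) by (apply pow_lt, pow_lt; lra).
  unfold tail_ratio. rewrite Cmod_mult, Cmod_inv.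
  2:{ intros E. rewrite E, Cmod_0 in Hden_ge. lra. }
  apply Rmult_le_compat; [apply Cmod_ge_0|left; apply Rinv_0_lt_compat; lra|exact Hnum_le|].
  apply Rinv_le_contravar; assumption.
Qed.

Lemma term_dominated : eventually (fun n => forall k, Cmod (term n k) <= majorant k).
Proof.
  assert (Hlam : eventually (fun n => Rabs (lambda_red n) <= Rabs Lambda + 1)).
  { assert (H := is_lim_seq_lambda_red). apply is_lim_seq_spec in H.
    eapply filter_imp; [|exact (H (mkposreal 1 Rlt_0_1))].
    intros n Hn. simpl in Hn. assert (X := Rabs_triang_inv (lambda_red n) Lambda). lra. }
  assert (Hnum := eventually_Cmod_qpow_lin_le q (r - 1) a b 1 Hq Rlt_0_1 Ha).
  assert (Hden := eventually_Cmod_qpow_lin_le q (s - 1) c d (/ 2) Hq ltac:(lra) Hc).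
  eapply filter_imp; [|exact (filter_and _ _ Hlam (filter_and _ _ Hnum Hden))].
  intros n [Hlam_n [Hnum_n Hden_n]] k.
  assert (Hcoef : Rabs (qprod_diff (q ^ n) q k * lambda_red n ^ k)
                  <= q ^ binom2 k * (Rabs Lambda + 1) ^ k).
  { rewrite Rabs_mult, <- RPow_abs.
    apply Rmult_le_compat; [apply Rabs_pos|apply pow_le, Rabs_pos|now apply Rabs_qprod_diff_pow_le|].
    apply pow_incr. split; [apply Rabs_pos|exact Hlam_n]. }
  rewrite term_factor, !Cmod_mult, Cmod_R.
  eapply Rle_trans.
  { apply Rmult_le_compat; [apply Rmult_le_pos; apply Rabs_pos || apply Cmod_ge_0|apply Cmod_ge_0| |].
    - apply Rmult_le_compat; [apply Rabs_pos|apply Cmod_ge_0|exact Hcoef|].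
      exact (Cmod_tail_ratio_le n k Hnum_n Hden_n).
    - apply Cmod_common_factor_le. }
  right. unfold majorant, growth. rewrite !Rpow_mult_distr, <- !pow_inv, Rinv_inv, <- !pow_mult.
  rewrite (Nat.mul_comm k (r - 1)), (Nat.mul_comm k (s - 1)). unfold Rdiv. ring.
Qed.

Lemma ex_series_majorant : ex_series majorant.
Proof.
  apply (ex_series_qgauss q (Rpower q alpha) q growth Hq);
    [|apply rqpoch_alpha_neq0|intros k; now apply rqpoch_q_neq0].
  unfold growth. assert (0 <= Cmod z) by apply Cmod_ge_0.
  repeat apply Rmult_lt_0_compat; try (apply pow_lt); try lra.
  assert (0 <= Rabs Lambda) by apply Rabs_pos. lra.
Qed.

End Confluence.

Theorem proposition4 (q : R) (r s : nat) (alpha : R)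
  (a c : nat -> R) (b d : nat -> C) (z : C) :
  0 < q < 1 ->
  (1 <= r)%nat -> (1 <= s)%nat -> (r - 1 <= s)%nat ->
  (forall m : nat, alpha <> - INR m) ->
  (forall j, (j < r - 1)%nat -> 0 < a j) ->
  (forall l, (l < s - 1)%nat -> 0 < c l) ->
  (forall j n m : nat, (j < r - 1)%nat -> (1 <= n)%nat ->
     a j * INR n + Re (b j) <> - INR m) ->
  (forall l n m : nat, (l < s - 1)%nat -> (1 <= n)%nat ->
     c l * INR n + Re (d l) <> - INR m) ->
  let A := rprod (r - 1) (fun j => qnum q (a j)) / rprod (s - 1) (fun l => qnum q (c l)) in
  let lambda (n : nat) : R :=
    Rpower q (INR n + alpha) * rprod (s - 1) (fun l => qnum (Rpower q (c l)) (INR n))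
    / (qnum q (INR n) * rprod (r - 1) (fun j => qnum (Rpower q (a j)) (INR n)))
    * (q - 1) in
  let phi_n (n : nat) : C :=
    rphis
      (qpow q (RtoC (- INR n)) ::
         map (fun j => qpow q (Cplus (RtoC (a j * INR n)) (b j))) (seq 0 (r - 1)))
      (qpow q (RtoC alpha) ::
         map (fun l => qpow q (Cplus (RtoC (c l * INR n)) (d l))) (seq 0 (s - 1)))
      q (Cmult (RtoC (lambda n)) z) in
  let rhs_term (k : nat) : C :=
    Cmult (RtoC (powerRZ (-1) ((1 + Z.of_nat r - Z.of_nat s) * Z.of_nat k)%Z
                 * powerRZ q ((2 + Z.of_nat s - Z.of_nat r) * Z.of_nat (binom2 k))%Z
                 * A ^ k))
      (Cdiv (Cmult (pow_n z k)
                   (RtoC (Rpower q (alpha * INR k)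
                          * powerRZ (1 - q) ((2 + Z.of_nat r - Z.of_nat s) * Z.of_nat k)%Z)))
            (Cmult (qpoch (qpow q (RtoC alpha)) q k) (qpoch (RtoC q) q k))) in
  exists L : C, is_series rhs_term L /\ filterlim phi_n eventually (locally L).
Proof.
  (* The conditions on [b] and [d] only make every [phi_n n] well defined; the limit
     involves large [n] alone, where the parameters [q^(c_l n + d_l)] are small. *)
  intros Hq Hr Hs Hrs Halpha Ha Hc _ _ A lambda phi_n rhs_term.
  destruct (term_dominated q alpha r s a c b d z Hq Hr Hs Hrs Halpha Ha Hc) as [N HN].
  destruct (tannery_C (term q alpha r s a c b d z) (limit_term q alpha r s a c z)
              (majorant q alpha r s a c z) N
              (is_lim_Cseq_term q alpha r s a c b d z Hq Hr Hs Hrs Ha Hc)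
              (fun n k Hn => HN n Hn k)
              (ex_series_majorant q alpha r s a c z Hq Halpha)) as [L [HL Hlim]].
  exists L. split; [exact HL|].
  eapply filterlim_ext; [|exact Hlim]. intros n. unfold phi_n. rewrite rphis_Series. reflexivity.
Qed.
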